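(* Let $\overline{C}(\alpha,N)$ be as defined in the context. Then: (1) For real $0\le\alpha\le2$ and integers $N\ge2$, $\overline{C}(\alpha,N)=\overline{C}(2-\alpha,N)\ge1$. (2) For real $0\le\alpha_1<\alpha_2\le2$, $0<\theta<1$ and positive integers $N$, $\overline{C}(\theta\alpha_1+(1-\theta)\alpha_2,N)\le\overline{C}(\alpha_1,N)^{\theta}\,\overline{C}(\alpha_2,N)^{1-\theta}$. (3) For real $0\le\alpha_1<\alpha_2\le1$ and positive integers $N$, $\overline{C}(\alpha_1,N)\ge\overline{C}(\alpha_2,N)$. (4) For real $0\le\alpha<\tfrac12$ there is a constant $c_\alpha>0$ such that $\overline{C}(\alpha,N)\ge c_\alpha N^{\frac12-\alpha}$ for all integers $N\ge2$.
   Context: For a strictly increasing sequence $(\lambda_k)_{k=-\infty}^{\infty}$ of real numbers, put $\delta_k:=\min\{\lambda_k-\lambda_{k-1},\lambda_{k+1}-\lambda_k\}$. For $0\le\alpha\le2$ and a positive integer $N$, let $\overline{C}(\alpha,N)$ be the minimum of all constants $C(\alpha,N)$ such that $$\sum_{m=1}^N\sum_{\substack{n=1\\ n\ne m}}^N\frac{\delta_m^{2-\alpha}\delta_n^{\alpha}t_mt_n}{(\lambda_m-\lambda_n)^2}\le C(\alpha,N)\sum_{n=1}^N t_n^2$$ holds for every strictly increasing real sequence $(\lambda_k)_{k\in\mathbb Z}$ and all nonnegative reals $t_1,\dots,t_N$. *)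

From HB Require Import structures.
From mathcomp Require Import all_boot all_order all_algebra.
From mathcomp Require Import all_classical all_reals all_analysis.
Set Implicit Arguments. Unset Strict Implicit. Unset Printing Implicit Defensive.
Import Order.TTheory GRing.Theory Num.Theory.
Local Open Scope ring_scope.
Local Open Scope classical_set_scope.

Section Defs.
Variable R : realType.

Definition strictly_increasing (lam : int -> R) : Prop :=
  forall i j : int, i < j -> lam i < lam j.

Definition delta (lam : int -> R) (k : int) : R :=
  Num.min (lam k - lam (k - 1)) (lam (k + 1) - lam k).

Definition lhs (alpha : R) (N : nat) (lam : int -> R) (t : nat -> R) : R :=
  \sum_(1 <= m < N.+1) \sum_(1 <= n < N.+1 | n != m)
     (delta lam m%:Z `^ (2 - alpha) * delta lam n%:Z `^ alpha * t m * t n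
       / (lam m%:Z - lam n%:Z) ^+ 2).

Definition admissible (alpha : R) (N : nat) (C : R) : Prop :=
  forall lam : int -> R, strictly_increasing lam ->
  forall t : nat -> R, (forall n, 0 <= t n) ->
  lhs alpha N lam t <= C * \sum_(1 <= n < N.+1) t n ^+ 2.

Definition Cbar (alpha : R) (N : nat) : R := inf [set C | admissible alpha N C].

End Defs.

From HB Require Import structures.
From mathcomp Require Import all_boot all_order all_algebra.
From mathcomp Require Import all_classical all_reals all_analysis.
From mathcomp Require Import ring lra zify.
Set Implicit Arguments. Unset Strict Implicit. Unset Printing Implicit Defensive.
Import Order.TTheory GRing.Theory Num.Theory.
Local Open Scope ring_scope.

(* Since delta_m and delta_n are both at most |lambda_m - lambda_n|, every summand
   is at most t_m t_n; so admissible constants exist, they are nonnegative, and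
   Cbar is itself admissible.  Replacing alpha by 2 - alpha transposes the form,
   whence the symmetry.  Each summand is log-affine in alpha, so Hoelder's
   inequality makes alpha |-> log Cbar(alpha, N) convex; interpolating between
   alpha_1 and 2 - alpha_1, where Cbar takes the same value, gives monotonicity
   on [0, 1].  The lower bounds are witnessed by lambda_k = k with t the
   indicator of {1, 2}, giving Cbar >= 1, and by the integers with gaps of
   length N on both sides of lambda_1, with t_1 = sqrt N and t_n = 1 otherwise:
   each of the N - 1 terms (1, n) is at least N^(1/2 - alpha) / 4, while
   sum t_n^2 <= 2 N. *)

Section SumInequalities.
Variable R : realType.

Lemma ler_sum_term (I : eqType) (r : seq I) (P : pred I) (F : I -> R) k :
  k \in r -> uniq r -> P k -> (forall i, P i -> 0 <= F i) ->
  F k <= \sum_(i <- r | P i) F i.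
Proof.
move=> kr ur Pk F0; rewrite big_mkcond (bigD1_seq k) //= Pk lerDl.
by apply: sumr_ge0 => i _; case: ifP => // /F0.
Qed.

Lemma ler_sum_pair (I : eqType) (r : seq I) (P : pred I) (F : I -> R) k l :
  k \in r -> l \in r -> uniq r -> k != l -> P k -> P l ->
  (forall i, P i -> 0 <= F i) ->
  F k + F l <= \sum_(i <- r | P i) F i.
Proof.
move=> kr lr ur kl Pk Pl F0; rewrite big_mkcond (bigD1_seq k) //= Pk lerD2l.
have := @ler_sum_term _ r (predC1 k) (fun i => if P i then F i else 0) l.
rewrite Pl; apply=> //; first by rewrite /= eq_sym.
by move=> i _; case: ifP => // /F0.
Qed.

Lemma powR_mul_powR_subr (x th : R) : 0 <= x -> x `^ th * x `^ (1 - th) = x.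
Proof. by move=> x0; rewrite -powRD subrKC ?powRr1 ?oner_eq0. Qed.

Lemma powR_weighted_amgm (x y th : R) : 0 <= x -> 0 <= y -> 0 < th -> th < 1 ->
  x `^ th * y `^ (1 - th) <= th * x + (1 - th) * y.
Proof.
move=> x0 y0 th0 th1; have th1' : 0 < 1 - th by rewrite subr_gt0.
have := @conjugate_powR _ (x `^ th) (y `^ (1 - th)) th^-1 (1 - th)^-1
  (powR_ge0 _ _) (powR_ge0 _ _).
rewrite !invr_gt0 !invrK subrKC => /(_ th0 th1' erefl).
by rewrite -!powRrM !divff ?gt_eqF // !powRr1 // [x * _]mulrC [y * _]mulrC.
Qed.

(* Normalising both sums to 1 reduces the claim to the weighted AM-GM inequality. *)
Lemma hoelder_sum (I : eqType) (r : seq I) (P : pred I) (F G : I -> R) (th : R) :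
  0 < th -> th < 1 -> (forall i, 0 <= F i) -> (forall i, 0 <= G i) ->
  \sum_(i <- r | P i) F i `^ th * G i `^ (1 - th) <=
  (\sum_(i <- r | P i) F i) `^ th * (\sum_(i <- r | P i) G i) `^ (1 - th).
Proof.
move=> th0 th1 F0 G0; have th1' : 0 < 1 - th by rewrite subr_gt0.
set X := \sum_(i <- r | P i) F i; set Y := \sum_(i <- r | P i) G i.
have [X0|X0] := eqVneq X 0.
  rewrite big1_seq ?mulr_ge0 ?powR_ge0 // => i /andP[Pi ri].
  move/eqP: X0; rewrite psumr_eq0 // => /allP/(_ i ri); rewrite Pi => /eqP ->.
  by rewrite powR0 ?gt_eqF ?mul0r.
have {}X0 : 0 < X by rewrite lt_def X0 sumr_ge0.
have [Y0|Y0] := eqVneq Y 0.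
  rewrite big1_seq ?mulr_ge0 ?powR_ge0 // => i /andP[Pi ri].
  move/eqP: Y0; rewrite psumr_eq0 // => /allP/(_ i ri); rewrite Pi => /eqP ->.
  by rewrite powR0 ?gt_eqF ?mulr0.
have {}Y0 : 0 < Y by rewrite lt_def Y0 sumr_ge0.
have normalise i : F i `^ th * G i `^ (1 - th) =
    X `^ th * Y `^ (1 - th) * ((F i / X) `^ th * (G i / Y) `^ (1 - th)).
  rewrite !powRM ?invr_ge0 ?F0 ?G0 ?(ltW X0) ?(ltW Y0) //.
  rewrite -!powR_inv1 ?(ltW X0) ?(ltW Y0) // -!powRrM !mulN1r !powRN.
  by field; rewrite !gt_eqF ?powR_gt0.
under eq_bigr do rewrite normalise.
rewrite -big_distrr /= ger_pMr ?mulr_gt0 ?powR_gt0 //.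
apply: le_trans (ler_sum _ (fun i _ => powR_weighted_amgm
  (divr_ge0 (F0 i) (ltW X0)) (divr_ge0 (G0 i) (ltW Y0)) th0 th1)) _.
rewrite big_split /= -!big_distrr /= -!big_distrl /= -/X -/Y.
by rewrite !divff ?gt_eqF // !mulr1 subrKC.
Qed.

End SumInequalities.

Section BilinearForm.
Variable R : realType.
Implicit Types (lam : int -> R) (t : nat -> R) (alpha : R).

Definition lhs_term alpha lam t (m n : nat) : R :=
  delta lam m%:Z `^ (2 - alpha) * delta lam n%:Z `^ alpha * t m * t n
    / (lam m%:Z - lam n%:Z) ^+ 2.

Lemma lhsE alpha N lam t : lhs alpha N lam t =
  \sum_(1 <= m < N.+1) \sum_(1 <= n < N.+1 | n != m) lhs_term alpha lam t m n.
Proof. by []. Qed.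

Lemma lhs_term_ge0 alpha lam t m n :
  (forall k, 0 <= t k) -> 0 <= lhs_term alpha lam t m n.
Proof. by move=> t0; rewrite divr_ge0 ?sqr_ge0 // !mulr_ge0 ?powR_ge0. Qed.

Lemma lhs_ge0 alpha N lam t : (forall k, 0 <= t k) -> 0 <= lhs alpha N lam t.
Proof.
by move=> t0; rewrite lhsE; do 2 apply: sumr_ge0 => ? _; apply: lhs_term_ge0.
Qed.

Lemma lhs_term_reflect alpha lam t m n :
  lhs_term (2 - alpha) lam t m n = lhs_term alpha lam t n m.
Proof.
rewrite /lhs_term opprB addrC subrK.
by congr (_ / _); [ring | rewrite -sqrrN opprB].
Qed.

Lemma lhs_reflect alpha N lam t : lhs (2 - alpha) N lam t = lhs alpha N lam t.
Proof.
rewrite !lhsE; under eq_bigr do rewrite big_mkcond.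
rewrite exchange_big_nat /= big_mkcond /=.
apply: eq_bigr => m _; rewrite [RHS]big_mkcond; apply: eq_bigr => n _.
by rewrite eq_sym lhs_term_reflect.
Qed.

Lemma lhs_ge_row alpha N lam t k : (1 <= k <= N)%N -> (forall i, 0 <= t i) ->
  \sum_(1 <= n < N.+1 | n != k) lhs_term alpha lam t k n <= lhs alpha N lam t.
Proof.
move=> kN t0; rewrite lhsE; apply: ler_sum_term; rewrite ?iota_uniq //.
  by rewrite mem_index_iota ltnS.
by move=> i _; apply: sumr_ge0 => n _; apply: lhs_term_ge0.
Qed.

Lemma lhs_ge_pair alpha N lam t m n : (1 <= m <= N)%N -> (1 <= n <= N)%N ->
  m != n -> (forall i, 0 <= t i) ->
  lhs_term alpha lam t m n + lhs_term alpha lam t n m <= lhs alpha N lam t.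
Proof.
move=> mN nN mn t0; rewrite lhsE.
have row i j : (1 <= j <= N)%N -> j != i ->
    lhs_term alpha lam t i j <= \sum_(1 <= n < N.+1 | n != i) lhs_term alpha lam t i n.
  move=> jN ji; apply: ler_sum_term; rewrite ?iota_uniq //.
    by rewrite mem_index_iota ltnS.
  by move=> k _; apply: lhs_term_ge0.
have nm : n != m by rewrite eq_sym.
apply: le_trans (lerD (row m n nN nm) (row n m mN mn)) _.
apply: (ler_sum_pair (F := fun i =>
  \sum_(1 <= n < N.+1 | n != i) lhs_term alpha lam t i n));
  rewrite ?mem_index_iota ?ltnS ?iota_uniq //.
by move=> i _; apply: sumr_ge0 => k _; apply: lhs_term_ge0.
Qed.

Section StrictlyIncreasing.
Variables (lam : int -> R) (lam_inc : strictly_increasing lam).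

Lemma strictly_increasing_le i j : i <= j -> lam i <= lam j.
Proof. by rewrite le_eqVlt => /predU1P[-> // | /lam_inc/ltW]. Qed.

Lemma delta_gt0 k : 0 < delta lam k.
Proof. by rewrite /delta lt_min !subr_gt0 !lam_inc //; lia. Qed.

Lemma delta_le_dist i j : i != j -> delta lam i <= `|lam i - lam j|.
Proof.
move=> ij; rewrite /delta ge_min; have [lij|lji] : i < j \/ j < i by lia.
- rewrite distrC ger0_norm ?subr_ge0 ?strictly_increasing_le ?(ltW lij) //.
  by apply/orP; right; rewrite lerB ?strictly_increasing_le //; lia.
- rewrite ger0_norm ?subr_ge0 ?strictly_increasing_le ?(ltW lji) //.
  by apply/orP; left; rewrite lerB ?strictly_increasing_le //; lia.
Qed.

Lemma dist_gt0 i j : i != j -> 0 < `|lam i - lam j|.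
Proof. by move=> ij; apply: lt_le_trans (delta_gt0 i) (delta_le_dist ij). Qed.

Lemma lhs_term_le_mul alpha t m n : 0 <= alpha <= 2 -> (forall k, 0 <= t k) ->
  m != n -> lhs_term alpha lam t m n <= t m * t n.
Proof.
move=> /andP[a0 a2] t0 mn; have mnZ : m%:Z != n%:Z by [].
set d : R := `|lam m%:Z - lam n%:Z|; have d0 : 0 < d := dist_gt0 mnZ.
have dm : delta lam m%:Z `^ (2 - alpha) <= d `^ (2 - alpha).
  by rewrite ge0_ler_powR ?nnegrE ?subr_ge0 ?(ltW d0) ?(ltW (delta_gt0 _)) ?delta_le_dist.
have dn : delta lam n%:Z `^ alpha <= d `^ alpha.
  rewrite ge0_ler_powR ?nnegrE ?(ltW d0) ?(ltW (delta_gt0 _)) // /d distrC.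
  by rewrite delta_le_dist // eq_sym.
have dd : delta lam m%:Z `^ (2 - alpha) * delta lam n%:Z `^ alpha <= d ^+ 2.
  apply: le_trans (ler_pM (powR_ge0 _ _) (powR_ge0 _ _) dm dn) _.
  by rewrite -powRD ?(gt_eqF d0) ?implybT // subrK (@powR_mulrn _ d 2) ?(ltW d0).
rewrite /lhs_term -[_ ^+ 2]real_normK ?num_real // -/d.
rewrite ler_pdivrMr ?exprn_gt0 // -mulrA [X in _ <= X]mulrC.
by apply: ler_wpM2r; rewrite ?mulr_ge0.
Qed.

End StrictlyIncreasing.

Lemma admissible_2N alpha N : 0 <= alpha <= 2 -> admissible alpha N (2 * N%:R).
Proof.
move=> a02 lam lam_inc t t0; rewrite lhsE.
apply: (@le_trans _ _
  (\sum_(1 <= m < N.+1) \sum_(1 <= n < N.+1) (t m ^+ 2 + t n ^+ 2))).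
  apply: ler_sum => m _; rewrite [X in _ <= X](bigID (fun n => n != m)) /=.
  apply: ler_wpDr; first by apply: sumr_ge0 => n _; rewrite addr_ge0 ?sqr_ge0.
  apply: ler_sum => n nm; rewrite eq_sym in nm.
  apply: le_trans (lhs_term_le_mul lam_inc a02 t0 nm) _.
  by have := t0 m; have := t0 n; nra.
under eq_bigr do rewrite big_split /= sumr_const_nat.
rewrite big_split /= sumr_const_nat subSS subn0.
under eq_bigr do rewrite -mulr_natr.
by rewrite -big_distrl /= -mulr_natr; lra.
Qed.

Lemma admissible_ge0 alpha N C : (0 < N)%N -> admissible alpha N C -> 0 <= C.
Proof.
move=> N0 C_adm; have int_inc : strictly_increasing (fun k : int => k%:~R : R).
  by move=> i j; rewrite ltr_int.
have := C_adm _ int_inc (fun _ => 1) (fun _ => ler01).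
rewrite sumr_const_nat subSS subn0 expr1n => /(le_trans (lhs_ge0 _ _ _ _)).
by rewrite pmulr_lge0 ?ltr0n //; apply; rewrite ler01.
Qed.

Lemma Cbar_le alpha N C : (0 < N)%N -> admissible alpha N C -> Cbar alpha N <= C.
Proof.
by move=> N0 C_adm; apply: ge_inf => //; exists 0 => D /admissible_ge0; apply.
Qed.

Lemma Cbar_admissible alpha N : 0 <= alpha <= 2 -> admissible alpha N (Cbar alpha N).
Proof.
move=> a02 lam lam_inc t t0.
set S := \sum_(1 <= n < N.+1) t n ^+ 2.
have [S0|S0] := eqVneq S 0.
  by have := admissible_2N N a02 lam_inc t0; rewrite -/S S0 !mulr0.
have {}S0 : 0 < S by rewrite lt_def S0 sumr_ge0 // => n _; apply: sqr_ge0.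
rewrite -ler_pdivrMr //; apply: lb_le_inf.
  by exists (2 * N%:R); apply: admissible_2N.
by move=> C /= C_adm; rewrite ler_pdivrMr //; apply: C_adm.
Qed.

Lemma Cbar_ge0 alpha N : 0 <= alpha <= 2 -> (0 < N)%N -> 0 <= Cbar alpha N.
Proof. by move=> a02 N0; apply: admissible_ge0 N0 (Cbar_admissible N a02). Qed.

Lemma Cbar_reflect alpha N : Cbar (2 - alpha) N = Cbar alpha N.
Proof.
congr inf; apply/seteqP; split => C /= C_adm lam lam_inc t t0.
- by rewrite -(lhs_reflect alpha); apply: C_adm.
- by rewrite lhs_reflect; apply: C_adm.
Qed.

End BilinearForm.

Section Interpolation.
Variable R : realType.
Implicit Types (lam : int -> R) (t : nat -> R) (a : R).

Lemma lhs_term_interpolate (a1 a2 th : R) lam t m n : strictly_increasing lam ->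
  (forall k, 0 <= t k) -> 0 < th < 1 ->
  lhs_term (th * a1 + (1 - th) * a2) lam t m n =
  lhs_term a1 lam t m n `^ th * lhs_term a2 lam t m n `^ (1 - th).
Proof.
move=> lam_inc t0 /andP[th0 th1].
set c := t m * t n / (lam m%:Z - lam n%:Z) ^+ 2.
have c0 : 0 <= c by rewrite divr_ge0 ?sqr_ge0 ?mulr_ge0.
have termE a : lhs_term a lam t m n =
    delta lam m%:Z `^ (2 - a) * delta lam n%:Z `^ a * c.
  by rewrite /lhs_term /c; ring.
clearbody c.
have powRD_delta k r s : delta lam k `^ (r + s) = delta lam k `^ r * delta lam k `^ s.
  by rewrite powRD // (gt_eqF (delta_gt0 lam_inc k)) implybT.
rewrite !termE !powRM ?mulr_ge0 ?powR_ge0 // -!powRrM.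
rewrite -[c in LHS](powR_mul_powR_subr th c0).
have -> : 2 - (th * a1 + (1 - th) * a2) = (2 - a1) * th + (2 - a2) * (1 - th)
  by ring.
rewrite [th * a1 + _](_ : _ = a1 * th + a2 * (1 - th)); last by ring.
by rewrite !powRD_delta; ring.
Qed.

Lemma lhs_log_convex (a1 a2 th : R) N lam t : strictly_increasing lam ->
  (forall k, 0 <= t k) -> 0 < th < 1 ->
  lhs (th * a1 + (1 - th) * a2) N lam t <=
  lhs a1 N lam t `^ th * lhs a2 N lam t `^ (1 - th).
Proof.
move=> lam_inc t0 th01; have /andP[th0 th1] := th01; rewrite !lhsE.
under eq_bigr do under eq_bigr do rewrite lhs_term_interpolate //.
apply: le_trans (ler_sum _ (fun m _ => hoelder_sum _ _ th0 th1 _ _)) _;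
  try by move=> *; apply: lhs_term_ge0.
by apply: hoelder_sum => // m; apply: sumr_ge0 => n _; apply: lhs_term_ge0.
Qed.

Lemma Cbar_log_convex (a1 a2 th : R) N : 0 <= a1 <= 2 -> 0 <= a2 <= 2 -> 0 < th < 1 ->
  (0 < N)%N ->
  Cbar (th * a1 + (1 - th) * a2) N <= Cbar a1 N `^ th * Cbar a2 N `^ (1 - th).
Proof.
move=> a1_02 a2_02 th01 N0; have /andP[th0 th1] := th01.
apply: Cbar_le => // lam lam_inc t t0.
set S := \sum_(1 <= n < N.+1) t n ^+ 2.
have S0 : 0 <= S by apply: sumr_ge0 => n _; apply: sqr_ge0.
have C1_0 := Cbar_ge0 a1_02 N0; have C2_0 := Cbar_ge0 a2_02 N0.
have powR_le a (r : R) : 0 < r -> 0 <= a <= 2 ->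
    lhs a N lam t `^ r <= (Cbar a N * S) `^ r.
  move=> r0 a02; apply: ge0_ler_powR; rewrite ?nnegrE ?(ltW r0) ?lhs_ge0 //.
    by rewrite mulr_ge0 ?Cbar_ge0.
  exact: Cbar_admissible N a02 lam lam_inc t t0.
apply: le_trans (lhs_log_convex _ _ _ lam_inc t0 th01) _.
apply: le_trans (ler_pM (powR_ge0 _ _) (powR_ge0 _ _)
  (powR_le _ _ th0 a1_02) (powR_le _ _ _ a2_02)) _; first by rewrite subr_gt0.
by rewrite (powRM _ C1_0 S0) (powRM _ C2_0 S0) mulrACA (powR_mul_powR_subr th S0).
Qed.

Lemma Cbar_nonincreasing (a1 a2 : R) N : 0 <= a1 -> a1 < a2 <= 1 -> (0 < N)%N ->
  Cbar a2 N <= Cbar a1 N.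
Proof.
move=> a1_0 /andP[a12 a2_1] N0.
have a1_02 : 0 <= a1 <= 2 by apply/andP; split; lra.
have a1'_02 : 0 <= 2 - a1 <= 2 by apply/andP; split; lra.
have th01 : 0 < (2 - a1 - a2) / (2 - 2 * a1) < 1.
  by apply/andP; split; rewrite ?divr_gt0 ?ltr_pdivrMr ?mul1r; lra.
have mix : (2 - a1 - a2) / (2 - 2 * a1) * a1 +
    (1 - (2 - a1 - a2) / (2 - 2 * a1)) * (2 - a1) = a2 by field; lra.
have := Cbar_log_convex a1_02 a1'_02 th01 N0.
by rewrite mix (Cbar_reflect a1 N) (powR_mul_powR_subr _ (Cbar_ge0 a1_02 N0)).
Qed.

End Interpolation.

Section LowerBounds.
Variable R : realType.
Implicit Types (lam : int -> R) (t : nat -> R) (alpha D : R).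

Lemma lhs_term_ge alpha lam t m n (A B : R) : 0 <= alpha <= 2 ->
  strictly_increasing lam -> (forall k, 0 <= t k) -> m != n ->
  0 < A <= delta lam m%:Z -> 1 <= delta lam n%:Z -> `|lam m%:Z - lam n%:Z| <= B ->
  A `^ (2 - alpha) * (t m * t n) / B ^+ 2 <= lhs_term alpha lam t m n.
Proof.
move=> /andP[a0 a2] lam_inc t0 mn /andP[A0 Am] dn dB.
have mnZ : m%:Z != n%:Z by [].
have d0 := dist_gt0 lam_inc mnZ.
have deltas : A `^ (2 - alpha) <= delta lam m%:Z `^ (2 - alpha) * delta lam n%:Z `^ alpha.
  rewrite -[X in X <= _]mulr1; apply: ler_pM; rewrite ?powR_ge0 //.
    by rewrite ge0_ler_powR ?nnegrE ?subr_ge0 ?(ltW A0) ?(le_trans (ltW A0) Am).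
  have := @ge0_ler_powR _ alpha a0 1 (delta lam n%:Z).
  by rewrite powR1 /=; apply; rewrite ?nnegrE ?ler01 ?(le_trans ler01 dn).
rewrite /lhs_term -(real_normK (num_real (lam m%:Z - lam n%:Z))) -[_ * t m * t n]mulrA.
apply: ler_pM; rewrite ?invr_ge0 ?sqr_ge0 ?mulr_ge0 ?powR_ge0 //.
  by apply: ler_wpM2r; rewrite ?mulr_ge0.
rewrite lef_pV2 ?posrE ?exprn_gt0 ?(lt_le_trans d0 dB) //.
by rewrite lerXn2r ?nnegrE ?(ltW d0) ?(ltW (lt_le_trans d0 dB)).
Qed.

(* The integers with [D] inserted into both gaps next to [1]:
   [.., -1, 0, 1 + D, 2 + 2 D, 3 + 2 D, ..]. *)
Definition gap_seq (D : R) (k : int) : R :=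
  k%:~R + D * (1 <= k)%R%:R + D * (2 <= k)%R%:R.

Lemma gap_seq_sub D (i j : int) : 0 <= D -> i <= j ->
  (j - i)%:~R <= gap_seq D j - gap_seq D i <= (j - i)%:~R + 2 * D.
Proof.
move=> D0 ij.
have step c : 0 <= ((c <= j)%R%:R - (c <= i)%R%:R : R) <= 1.
  have : (c <= i)%R ==> (c <= j)%R by apply/implyP => /le_trans; apply.
  by case: (c <= i) (c <= j) => [] [] //= _; lra.
have /andP[a1 b1] := step 1; have /andP[a2 b2] := step 2.
have -> : gap_seq D j - gap_seq D i = (j - i)%:~R +
    D * ((1 <= j)%R%:R - (1 <= i)%R%:R) + D * ((2 <= j)%R%:R - (2 <= i)%R%:R).
  by rewrite /gap_seq intrB; ring.
by apply/andP; split; nra.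
Qed.

Lemma gap_seq_increasing D : 0 <= D -> strictly_increasing (gap_seq D).
Proof.
move=> D0 i j ij; have /andP[+ _] := gap_seq_sub D0 (ltW ij).
by rewrite -subr_gt0; apply: lt_le_trans; rewrite ltr0z subr_gt0.
Qed.

Lemma delta_gap_seq_ge1 D k : 0 <= D -> 1 <= delta (gap_seq D) k.
Proof.
move=> D0; have km : k - 1 <= k by lia. have kp : k <= k + 1 by lia.
have /andP[left _] := gap_seq_sub D0 km; have /andP[right _] := gap_seq_sub D0 kp.
rewrite /delta le_min; apply/andP; split.
  by move: left; rewrite opprB addrC subrK.
by move: right; rewrite addrAC subrr add0r.
Qed.

Lemma gap_seq1 D : gap_seq D 1 = 1 + D.
Proof. by rewrite /gap_seq /= mulr1 mulr0 addr0. Qed.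

Lemma gap_seq_nat D (n : nat) : (2 <= n)%N -> gap_seq D n%:Z = n%:R + 2 * D.
Proof.
move=> n2; have n1 : (1 <= n%:Z) = true by lia.
have {}n2 : (2 <= n%:Z) = true by lia.
by rewrite /gap_seq n1 n2 /= !mulr1 -pmulrn; ring.
Qed.

Lemma delta_gap_seq1 D : 0 <= D -> 1 + D <= delta (gap_seq D) 1.
Proof.
move=> D0; rewrite /delta le_min (_ : 1 + 1 = 2%:Z) // gap_seq_nat // gap_seq1.
by rewrite /gap_seq /= !mulr0 !addr0; apply/andP; split; lra.
Qed.

Lemma admissible_ge1 alpha N C : 0 <= alpha <= 2 -> (2 <= N)%N ->
  admissible alpha N C -> 1 <= C.
Proof.
move=> a02 N2 C_adm; have lam_inc := gap_seq_increasing (lexx (0 : R)).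
pose t n : R := if (n <= 2)%N then 1 else 0.
have t0 n : 0 <= t n by rewrite /t; case: ifP.
have sum_t : \sum_(1 <= n < N.+1) t n ^+ 2 = 2.
  rewrite big_ltn; last lia. rewrite big_ltn; last lia.
  rewrite big_nat big1 => [|n /andP[n3 _]]; last by rewrite /t ifF ?expr0n //; lia.
  by rewrite /t /= expr1n addr0.
have pair m n : (m == 1%N) && (n == 2%N) || (m == 2%N) && (n == 1%N) ->
    1 <= lhs_term alpha (gap_seq 0) t m n.
  move=> mn; have [m12 n12] : (m <= 2)%N /\ (n <= 2)%N by case/orP: mn => /andP[/eqP-> /eqP->].
  have := @lhs_term_ge alpha _ t m n 1 1 a02 lam_inc t0.
  rewrite powR1 mul1r expr1n divr1 /t m12 n12 mulr1; apply.
  - by case/orP: mn => /andP[/eqP-> /eqP->].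
  - by rewrite ltr01 delta_gap_seq_ge1.
  - by rewrite delta_gap_seq_ge1.
  by case/orP: mn => /andP[/eqP-> /eqP->]; rewrite gap_seq1 gap_seq_nat //;
    rewrite mulr0 !addr0 ?[`|1 - _|]distrC ger0_norm; lra.
have N1 : (1 <= 1 <= N)%N by lia. have N2' : (1 <= 2 <= N)%N by lia.
have := lhs_ge_pair alpha (gap_seq 0) N1 N2' isT t0.
move=> /(le_trans (lerD (pair 1%N 2%N isT) (pair 2%N 1%N isT))).
by have := C_adm _ lam_inc t t0; rewrite sum_t; lra.
Qed.

Section SpikeVector.
Variables (N : nat) (N2 : (2 <= N)%N).

Let N_gt0 : (0 : R) < N%:R.
Proof. by rewrite ltr0n; lia. Qed.

Let gap_ge0 : (0 : R) <= N%:R - 1.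
Proof. by rewrite subr_ge0 ler1n; lia. Qed.

Definition spike (n : nat) : R := if n == 1%N then N%:R `^ (1 / 2) else 1.

Lemma spike_ge0 n : 0 <= spike n.
Proof. by rewrite /spike; case: ifP; rewrite ?powR_ge0. Qed.

Lemma sum_spike_sqr : \sum_(1 <= n < N.+1) spike n ^+ 2 <= 2 * N%:R.
Proof.
rewrite big_ltn; last lia.
rewrite (eq_big_nat _ _ (F2 := fun=> 1)) => [|n /andP[n2 _]]; last first.
  by rewrite /spike ifF ?expr1n //; apply/eqP; lia.
have half : 1 / 2 * 2 = 1 :> R by field.
rewrite sumr_const_nat /spike /= -powR_mulrn ?powR_ge0 // -powRrM half.
rewrite powRr1 ?(ltW N_gt0) // subSS.
have : ((N - 1)%N%:R : R) <= N%:R by rewrite ler_nat; lia.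
lra.
Qed.

Lemma lhs_term_spike_ge alpha n : 0 <= alpha <= 2 -> (2 <= n <= N)%N ->
  N%:R `^ (1 / 2 - alpha) / 4 <= lhs_term alpha (gap_seq (N%:R - 1)) spike 1 n.
Proof.
move=> a02 /andP[n2 nN]; have n1 : n != 1%N by apply/eqP; lia.
have := @lhs_term_ge alpha _ spike 1 n N%:R (2 * N%:R) a02
  (gap_seq_increasing gap_ge0) spike_ge0.
have -> : N%:R `^ (1 / 2 - alpha) / 4 =
    N%:R `^ (2 - alpha) * (spike 1 * spike n) / (2 * N%:R) ^+ 2.
  have E : N%:R `^ (2 - alpha) * N%:R `^ (1 / 2) = N%:R `^ (1 / 2 - alpha) * N%:R ^+ 2.
    rewrite -(@powR_mulrn _ N%:R 2 (ltW N_gt0)) -!powRD ?(gt_eqF N_gt0) ?implybT //.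
    by congr (_ `^ _); ring.
  by rewrite /spike /= (negbTE n1) mulr1 E; field; rewrite gt_eqF.
apply; first by rewrite eq_sym.
- by rewrite N_gt0 /= (le_trans _ (delta_gap_seq1 gap_ge0)) //; lra.
- exact: delta_gap_seq_ge1.
have nR : (n%:R : R) <= N%:R by rewrite ler_nat.
have n2R : (2 : R) <= n%:R by rewrite ler_nat.
by rewrite gap_seq1 gap_seq_nat // distrC ger0_norm; lra.
Qed.

Lemma lhs_spike_ge alpha : 0 <= alpha <= 2 ->
  (N%:R - 1) * (N%:R `^ (1 / 2 - alpha) / 4) <= lhs alpha N (gap_seq (N%:R - 1)) spike.
Proof.
move=> a02; have N1 : (1 <= 1 <= N)%N by lia.
apply: le_trans (lhs_ge_row alpha _ N1 spike_ge0).
rewrite big_ltn_cond /=; last lia.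
rewrite big_nat_cond (eq_bigl (fun n => (2 <= n < N.+1)%N)) => [|n]; last first.
  by apply/andb_idr => /andP[n2 _]; apply/eqP; lia.
rewrite -big_nat.
apply: le_trans (ler_sum_nat (F := fun=> N%:R `^ (1 / 2 - alpha) / 4) _) => [|n];
  last exact: lhs_term_spike_ge.
by rewrite sumr_const_nat -(mulr_natl (N%:R `^ _ / 4)) subSS natrB //; lia.
Qed.

End SpikeVector.

Lemma admissible_ge_pow alpha N C : 0 <= alpha <= 2 -> (2 <= N)%N ->
  admissible alpha N C -> N%:R `^ (1 / 2 - alpha) / 16 <= C.
Proof.
move=> a02 N2 C_adm; have N2R : (2 : R) <= N%:R by rewrite ler_nat.
have gap_ge0 : (0 : R) <= N%:R - 1 by lra.
have C0 : 0 <= C by apply: admissible_ge0 C_adm; lia.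
have := le_trans (lhs_spike_ge N2 a02)
  (C_adm _ (gap_seq_increasing gap_ge0) _ (spike_ge0 N)).
have := ler_wpM2l C0 (sum_spike_sqr N2).
have := powR_ge0 N%:R (1 / 2 - alpha).
nra.
Qed.

End LowerBounds.

Theorem proposition3 (R : realType) :
  (forall (alpha : R) (N : nat), 0 <= alpha -> alpha <= 2 -> (2 <= N)%N ->
     Cbar alpha N = Cbar (2 - alpha) N /\ 1 <= Cbar alpha N) /\
  (forall (a1 a2 th : R) (N : nat), 0 <= a1 -> a1 < a2 -> a2 <= 2 ->
     0 < th -> th < 1 -> (0 < N)%N ->
     Cbar (th * a1 + (1 - th) * a2) N <=
       Cbar a1 N `^ th * Cbar a2 N `^ (1 - th)) /\
  (forall (a1 a2 : R) (N : nat), 0 <= a1 -> a1 < a2 -> a2 <= 1 -> (0 < N)%N ->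
     Cbar a2 N <= Cbar a1 N) /\
  (forall alpha : R, 0 <= alpha -> alpha < 1 / 2 ->
     exists c : R, 0 < c /\
       forall N : nat, (2 <= N)%N -> c * N%:R `^ (1 / 2 - alpha) <= Cbar alpha N).
Proof.
split.
  move=> alpha N a0 a2 N2; have a02 : 0 <= alpha <= 2 by rewrite a0 a2.
  split; first by rewrite Cbar_reflect.
  exact: admissible_ge1 a02 N2 (Cbar_admissible N a02).
split.
  move=> a1 a2 th N a1_0 a12 a2_2 th0 th1 N0.
  have a1_02 : 0 <= a1 <= 2 by rewrite a1_0 (le_trans (ltW a12) a2_2).
  have a2_02 : 0 <= a2 <= 2 by rewrite a2_2 (le_trans a1_0 (ltW a12)).
  by apply: Cbar_log_convex; rewrite ?th0 ?th1.
split.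
  by move=> a1 a2 N a1_0 a12 a2_1 N0; apply: Cbar_nonincreasing; rewrite ?a12.
move=> alpha a0 a_half; exists (1 / 16); split; first lra.
move=> N N2; have a02 : 0 <= alpha <= 2 by rewrite a0 /=; lra.
by have := admissible_ge_pow a02 N2 (Cbar_admissible N a02); lra.
Qed.
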